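(* Let $(X,d)$ be a separable metric space, $f:X\to X$ a Borel measurable map, and $A\subset X$ a Borel set such that $f$ is Lyapunov stable on $A$. Then $\mu(A)=0$ for every Borel probability measure $\mu$ that is an expansive measure of $f$.
   Context: $f$ is Lyapunov stable on $A$ if for every $x\in A$ and every $\epsilon>0$ there is a neighborhood $U(x)$ of $x$ such that $d(f^n(x),f^n(y))<\epsilon$ for all $n\ge0$ and all $y\in U(x)\cap A$. A Borel probability measure $\mu$ (not necessarily invariant) is an expansive measure of $f$ if there is $\delta>0$ with $\mu(\Phi_\delta(x))=0$ for all $x\in X$, where $\Phi_\delta(x)=\{y\in X: d(f^i(y),f^i(x))\le\delta \text{ for all } i\in\mathbb{N}\}$, $\mathbb{N}=\{0,1,2,\dots\}$. *)

From HB Require Import structures.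
From mathcomp Require Import all_boot all_order all_algebra.
From mathcomp Require Import all_classical all_reals all_analysis.
Set Implicit Arguments. Unset Strict Implicit. Unset Printing Implicit Defensive.
Import Order.TTheory GRing.Theory Num.Theory.
Local Open Scope classical_set_scope.
Local Open Scope ring_scope.

Section metric_defs.
Variables (R : realType) (X : Type) (d : X -> X -> R).

Definition is_metric : Prop :=
  [/\ forall x y, d x y = 0 <-> x = y,
      forall x y, d x y = d y x &
      forall x y z, d x z <= d x y + d y z].

Definition metric_open (U : set X) : Prop :=
  forall x, U x -> exists2 r : R, 0 < r & forall y, d x y < r -> U y.

Definition separable : Prop :=
  exists D : set X, countable D /\
    forall x (e : R), 0 < e -> exists y, D y /\ d x y < e.

Definition lyapunov_stable (f : X -> X) (A : set X) : Prop :=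
  forall x, A x -> forall e : R, 0 < e ->
    exists U : set X, [/\ metric_open U, U x &
      forall (n : nat) y, U y -> A y -> d (iter n f x) (iter n f y) < e].

Definition Phi (f : X -> X) (delta : R) (x : X) : set X :=
  [set y | forall i : nat, d (iter i f y) (iter i f x) <= delta].

End metric_defs.

Definition borelType (R : realType) (X : pointedType) (d : X -> X -> R) :=
  g_sigma_algebraType (metric_open d).

Definition expansive_measure (R : realType) (X : pointedType) (d : X -> X -> R)
    (f : X -> X) (mu : set (borelType d) -> \bar R) : Prop :=
  exists2 delta : R, 0 < delta & forall x : X, mu (Phi d f delta x) = 0%E.

From HB Require Import structures.
From mathcomp Require Import all_boot all_order all_algebra.
From mathcomp Require Import all_classical all_reals all_analysis.
From mathcomp Require Import lra.
Set Implicit Arguments. Unset Strict Implicit. Unset Printing Implicit Defensive.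
Import Order.TTheory GRing.Theory Num.Theory.
Local Open Scope classical_set_scope.
Local Open Scope ring_scope.

(* By Lyapunov stability every x in A has a neighbourhood whose trace on A
   stays delta-close to the orbit of x, i.e. lies in Phi_delta(x), a null set
   for an expansive measure. So A is locally null, and in a separable space
   countably many such neighbourhoods, balls of radius 1/(m+1) around points
   of a countable dense set, already cover A. *)

Lemma negligible_bigcup_countable d (T : sigmaRingType d) (R : realFieldType)
    (mu : {measure set T -> \bar R}) (I : Type) (D : set I) (F : I -> set T) :
  countable D -> (forall i, D i -> mu.-negligible (F i)) ->
  mu.-negligible (\bigcup_(i in D) F i).
Proof.
move=> /countable_injP[g ginj] DF.
apply: (@negligibleS _ _ _ _ (\bigcup_n \bigcup_(i in D `&` g @^-1` [set n]) F i)).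
  by move=> t [i Di Fit]; exists (g i) => //; exists i.
apply: negligible_bigcup => n.
have [[i [Di gin]]|nD] := pselect (exists i, D i /\ g i = n).
  apply: negligibleS (DF i Di) => t [j [Dj /= gjn] Fjt].
  by rewrite (ginj i j) ?inE // gin gjn.
by apply: negligibleS (negligible_set0 mu) => t [j [Dj gjn] _]; apply: nD; exists j.
Qed.

Lemma separable_locally_negligible dT (T : sigmaRingType dT) (R : realType)
    (d : T -> T -> R) (mu : {measure set T -> \bar R}) (A : set T) :
  is_metric d -> separable d ->
  (forall x, A x -> exists2 r : R, 0 < r &
     mu.-negligible (A `&` [set y | d x y < r])) ->
  mu.-negligible A.
Proof.
move=> [_ dC d_triangle] [D [cD dD]] Aloc.
pose piece q m := A `&` [set y | d q y < m.+1%:R^-1].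
pose null_piece q m := [set y | piece q m y /\ mu.-negligible (piece q m)].
apply: (@negligibleS _ _ _ _ (\bigcup_(q in D) \bigcup_m null_piece q m)); last first.
  apply: negligible_bigcup_countable cD _ => q _; apply: negligible_bigcup => m.
  have [Nqm|] := pselect (mu.-negligible (piece q m)).
    by apply: negligibleS Nqm => y [].
  by move=> nNqm; apply: negligibleS (negligible_set0 mu) => y [].
move=> z Az; have [r r0 Nzr] := Aloc z Az.
have [m] := @ltr_add_invr R 0 (r / 2) ltac:(lra); rewrite add0r => mr.
have [q [Dq zq]] := dD z m.+1%:R^-1 ltac:(by rewrite invr_gt0 ltr0Sn).
exists q => //; exists m => //; split; first by split; rewrite //= dC.
apply: negligibleS Nzr => y [Ay /= qy]; split => //=.
by move: (d_triangle z q y) zq qy mr; move: (m.+1%:R^-1 : R) => t; lra.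
Qed.

Lemma lyapunov_stable_locally_Phi (R : realType) (X : Type) (d : X -> X -> R)
    (f : X -> X) (A : set X) (delta : R) :
  (forall x y, d x y = d y x) -> lyapunov_stable d f A -> 0 < delta ->
  forall x, A x -> exists2 r : R, 0 < r &
    A `&` [set y | d x y < r] `<=` Phi d f delta x.
Proof.
move=> dC stable delta0 x Ax.
have [U [oU Ux stableU]] := stable x Ax delta delta0.
have [r r0 xrU] := oU x Ux.
exists r => // y [Ay /xrU Uy] n.
by rewrite dC; apply/ltW/stableU.
Qed.

Lemma measurable_fun_iter dT (T : measurableType dT) (f : T -> T) :
  measurable_fun [set: T] f -> forall n, measurable_fun [set: T] (iter n f).
Proof.
move=> mf; elim=> [|n IHn] /=; first exact: measurable_id.
exact: measurableT_comp mf IHn.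
Qed.

Lemma metric_open_measurable (R : realType) (X : pointedType) (d : X -> X -> R)
    (U : set X) :
  metric_open d U -> measurable (U : set (borelType d)).
Proof. exact: sub_sigma_algebra. Qed.

Lemma metric_open_dist_gt (R : realType) (X : Type) (d : X -> X -> R) (c : X) (r : R) :
  (forall x y z, d x z <= d x y + d y z) -> metric_open d [set z | r < d z c].
Proof.
move=> d_triangle z /= rz; exists (d z c - r); first by rewrite subr_gt0.
by move=> y zy; have := d_triangle z y c; lra.
Qed.

Lemma measurable_Phi (R : realType) (X : pointedType) (d : X -> X -> R)
    (f : X -> X) (delta : R) (x : X) :
  is_metric d ->
  measurable_fun [set: borelType d] (f : borelType d -> borelType d) ->
  measurable (Phi d f delta x : set (borelType d)).
Proof.
move=> [_ _ d_triangle] mf.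
have -> : Phi d f delta x =
    \bigcap_i (iter i f @^-1` ~` [set z | delta < d z (iter i f x)]).
  apply/seteqP; split => y /= Phiy i.
    by move=> _; apply/negP; rewrite -leNgt.
  by have /negP := Phiy i I; rewrite -leNgt.
apply: bigcapT_measurable => i; rewrite -[X in measurable X]setTI.
apply: (measurable_fun_iter mf i measurableT); apply: measurableC.
apply: metric_open_measurable; exact: metric_open_dist_gt.
Qed.

Theorem proposition3p4 (R : realType) (X : pointedType) (d : X -> X -> R)
  (f : X -> X) (A : set X) :
  is_metric d -> separable d ->
  measurable_fun [set: borelType d] (f : borelType d -> borelType d) ->
  measurable (A : set (borelType d)) ->
  lyapunov_stable d f A ->
  forall mu : probability (borelType d) R,
    expansive_measure f mu -> mu A = 0%E.
Proof.
move=> dm sep mf mA stable mu [delta delta0 muPhi].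
have dC : forall x y, d x y = d y x by case: dm.
apply/(negligibleP mu mA).
apply: (@separable_locally_negligible _ (borelType d) _ d) (dm) sep _ => x Ax.
have [r r0 APhi] := lyapunov_stable_locally_Phi dC stable delta0 Ax.
exists r => //.
apply: (@negligibleS _ _ _ mu (Phi d f delta x : set (borelType d))) APhi _.
by apply/negligibleP; [exact: measurable_Phi|exact: muPhi].
Qed.
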